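(* For all $\alpha\in(0,\pi/4]$ and $\beta\in[0,t(\alpha)]$, $$\max_{r\in[0,1]} f_1(\alpha,\beta,r)\ \ge\ \tfrac12\sqrt{6-2\cos(4\alpha)}.$$
   Context: $f_1(\alpha,\beta,r)=\frac{2\sin\alpha}{\cos\beta(\tan\alpha+\tan\beta)}\cdot\frac{1+\frac{2\tan\beta}{\tan\alpha+\tan\beta}r}{\sqrt{1+r^2+2\cos(2\alpha)r}}$, and $t(\alpha)=\arctan\!\left(\frac{\sin(3\alpha)-\sin\alpha}{3\cos\alpha-\cos(3\alpha)}\right)$. *)

From Stdlib Require Import Reals.
Open Scope R_scope.

Definition f1 (a b r : R) : R :=
  (2 * sin a / (cos b * (tan a + tan b))) *
  ((1 + (2 * tan b / (tan a + tan b)) * r) /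
   sqrt (1 + r ^ 2 + 2 * cos (2 * a) * r)).

Definition t (a : R) : R :=
  atan ((sin (3 * a) - sin a) / (3 * cos a - cos (3 * a))).

(** The maximum over [[0, 1]] exists because [f1 a b] is continuous there, and
    it is at least the value at [r = 0], which is [sin (2a) / sin (a + b)].
    The angle [t a] is exactly [atan (sin (2a)) - a], so [b <= t a] says
    [tan (a + b) <= sin (2a)], i.e. [sin (a + b) <= sin (2a) / sqrt (1 + sin (2a)^2)].
    Hence the value at [0] is at least [sqrt (1 + sin (2a)^2)], which is the
    bound since [6 - 2 cos (4a) = 4 (1 + sin (2a)^2)]. *)

From Stdlib Require Import Reals Lra Psatz.
Open Scope R_scope.

Lemma f1_continuity_pt (a b r : R) :
  0 <= cos (2 * a) -> 0 <= r -> continuity_pt (f1 a b) r.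
Proof.
  intros Hc Hr. unfold f1.
  set (K := 2 * sin a / (cos b * (tan a + tan b))).
  set (L := 2 * tan b / (tan a + tan b)).
  set (C := cos (2 * a)).
  assert (Hrad : 0 < 1 + r ^ 2 + 2 * C * r) by (unfold C in *; nra).
  change (continuity_pt (mult_fct (fct_cte K)
     (div_fct (plus_fct (fct_cte 1) (mult_fct (fct_cte L) id))
       (comp sqrt (fun r => 1 + r ^ 2 + 2 * C * r)))) r).
  apply continuity_pt_mult; [apply continuity_const; intros ? ?; reflexivity|].
  apply continuity_pt_div.
  - reg.
  - apply continuity_pt_comp; [reg|].
    apply continuity_pt_sqrt. lra.
  - unfold comp. intro H. apply sqrt_eq_0 in H; lra.
Qed.

Lemma f1_at_0 (a b : R) :
  0 < cos a -> 0 < cos b -> 0 < sin (a + b) ->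
  f1 a b 0 = sin (2 * a) / sin (a + b).
Proof.
  intros Hca Hcb Hs. rewrite sin_2a, sin_plus in *. unfold f1, tan.
  replace (1 + 0 ^ 2 + 2 * cos (2 * a) * 0) with 1 by ring.
  rewrite sqrt_1. field. repeat split; try lra; nra.
Qed.

Lemma sin_3a (a : R) : sin (3 * a) = 3 * sin a - 4 * sin a ^ 3.
Proof.
  replace (3 * a) with (2 * a + a) by ring.
  rewrite sin_plus, sin_2a, cos_2a_sin.
  assert (H := sin2_cos2 a). unfold Rsqr in H.
  replace (2 * sin a * cos a * cos a) with (2 * sin a * (cos a * cos a)) by ring.
  replace (cos a * cos a) with (1 - sin a * sin a) by lra. ring.
Qed.

Lemma cos_3a (a : R) : cos (3 * a) = 4 * cos a ^ 3 - 3 * cos a.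
Proof.
  replace (3 * a) with (2 * a + a) by ring.
  rewrite cos_plus, sin_2a, cos_2a_cos.
  assert (H := sin2_cos2 a). unfold Rsqr in H.
  replace (2 * sin a * cos a * sin a) with (2 * (sin a * sin a) * cos a) by ring.
  replace (sin a * sin a) with (1 - cos a * cos a) by lra. ring.
Qed.

(* The right-hand side is [tan (atan (sin (2a)) - a)] by the subtraction formula. *)
Lemma t_arg_eq_tan_sub (a : R) : 0 < cos a ->
  (sin (3 * a) - sin a) / (3 * cos a - cos (3 * a))
  = (sin (2 * a) - tan a) / (1 + sin (2 * a) * tan a).
Proof.
  intros Hc. rewrite sin_3a, cos_3a, sin_2a. unfold tan.
  assert (H := sin2_cos2 a). unfold Rsqr in H.
  replace (3 * cos a - (4 * cos a ^ 3 - 3 * cos a))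
    with (2 * cos a * (1 + 2 * sin a ^ 2)) by nra.
  replace (1 + 2 * sin a * cos a * (sin a / cos a))
    with (1 + 2 * sin a ^ 2) by (field; lra).
  replace (2 * sin a * cos a - sin a / cos a)
    with (sin a * (1 - 2 * sin a ^ 2) / cos a).
  2: { field_simplify_eq; [| lra].
       replace (cos a ^ 2) with (1 - sin a ^ 2) by nra. ring. }
  field. split; nra.
Qed.

Lemma atan_nonneg (x : R) : 0 <= x -> 0 <= atan x.
Proof.
  intros Hx. rewrite <- atan_0.
  destruct (Rle_lt_or_eq_dec 0 x Hx) as [Hlt | <-]; [left | right].
  - now apply atan_increasing.
  - reflexivity.
Qed.

Lemma t_eq_atan_sin_2a_sub (a : R) : 0 <= a < PI / 2 ->
  t a = atan (sin (2 * a)) - a.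
Proof.
  intros Ha.
  assert (Hk : 0 <= sin (2 * a)) by (apply sin_ge_0; lra).
  assert (Hatan := atan_bound (sin (2 * a))).
  assert (Hatan0 := atan_nonneg _ Hk).
  assert (Hca : 0 < cos a) by (apply cos_gt_0; lra).
  assert (Hta : 0 <= tan a) by (apply Rmult_le_pos; [apply sin_ge_0 | left; apply Rinv_0_lt_compat]; lra).
  unfold t. rewrite t_arg_eq_tan_sub by exact Hca.
  rewrite <- (atan_tan (atan (sin (2 * a)) - a)) by (split; lra).
  rewrite tan_minus, tan_atan; [reflexivity | ..]; try rewrite tan_atan;
    apply Rgt_not_eq; first [apply cos_gt_0; lra | nra].
Qed.

Lemma sin_le_of_le_atan (x k : R) :
  - (PI / 2) <= x <= atan k -> sin x <= k / sqrt (1 + k²).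
Proof.
  intros Hx. rewrite <- sin_atan.
  assert (Hatan := atan_bound k).
  apply sin_incr_1; lra.
Qed.

Lemma sqrt_one_add_sq_le_div (k x : R) :
  0 < x <= k / sqrt (1 + k²) -> sqrt (1 + k²) <= k / x.
Proof.
  intros [Hx Hxk].
  assert (Hs : 0 < sqrt (1 + k²)) by (apply sqrt_lt_R0; pose proof (Rle_0_sqr k); lra).
  apply (Rmult_le_compat_r (sqrt (1 + k²))) in Hxk; [| lra].
  replace (k / sqrt (1 + k²) * sqrt (1 + k²)) with k in Hxk by (field; lra).
  apply (Rmult_le_reg_r x); [exact Hx |].
  replace (k / x * x) with k by (field; lra).
  lra.
Qed.

Lemma half_sqrt_6_sub_2cos_4a (a : R) :
  / 2 * sqrt (6 - 2 * cos (4 * a)) = sqrt (1 + (sin (2 * a))²).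
Proof.
  replace (4 * a) with (2 * (2 * a)) by ring. rewrite cos_2a_sin.
  replace (6 - 2 * (1 - 2 * sin (2 * a) * sin (2 * a)))
    with (2 * 2 * (1 + (sin (2 * a))²)) by (unfold Rsqr; ring).
  rewrite sqrt_mult_alt, sqrt_square by lra.
  field.
Qed.

Theorem lemma9 (a b : R) :
  0 < a <= PI / 4 -> 0 <= b <= t a ->
  exists r : R, 0 <= r <= 1 /\
    (forall s : R, 0 <= s <= 1 -> f1 a b s <= f1 a b r) /\
    f1 a b r >= / 2 * sqrt (6 - 2 * cos (4 * a)).
Proof.
  intros Ha Hb.
  assert (HPI := PI_RGT_0).
  assert (Hc2a : 0 <= cos (2 * a)) by (apply cos_ge_0; lra).
  destruct (continuity_ab_maj (f1 a b) 0 1) as [M [HM HM01]]; [lra | |].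
  { intros r Hr. apply f1_continuity_pt; lra. }
  exists M. split; [exact HM01 | split; [exact HM |]].
  apply Rle_ge, Rle_trans with (f1 a b 0); [| apply HM; lra].
  rewrite t_eq_atan_sin_2a_sub in Hb by lra.
  assert (Hatan := atan_bound (sin (2 * a))).
  rewrite f1_at_0, half_sqrt_6_sub_2cos_4a; try (apply cos_gt_0 || apply sin_gt_0; lra).
  apply sqrt_one_add_sq_le_div. split.
  - apply sin_gt_0; lra.
  - apply sin_le_of_le_atan; lra.
Qed.
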